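(* Let $M$ be a group and let $\Gamma$ be a normal subgroup of $M$ of finite index with $\Gamma \cong \mathbb{Z}$. Then there exists a characteristic subgroup $\Theta$ of $M$ (i.e. one mapped to itself by every automorphism of $M$) such that $\Theta \cong \mathbb{Z}$ and $\Theta \subset \Gamma$. *)

From Stdlib Require Import ZArith List.

Record group := Group {
  carrier :> Type;
  gmul : carrier -> carrier -> carrier;
  ginv : carrier -> carrier;
  gone : carrier;
  gmulA : forall x y z, gmul x (gmul y z) = gmul (gmul x y) z;
  gmul1l : forall x, gmul gone x = x;
  gmul1r : forall x, gmul x gone = x;
  gmulVl : forall x, gmul (ginv x) x = gone;
  gmulVr : forall x, gmul x (ginv x) = gone
}.

Arguments gmul {g}.
Arguments ginv {g}.
Arguments gone {g}.

Definition is_subgroup (M : group) (H : M -> Prop) : Prop :=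
  H gone /\ (forall x y, H x -> H y -> H (gmul x y)) /\ (forall x, H x -> H (ginv x)).

Definition is_normal_subgroup (M : group) (H : M -> Prop) : Prop :=
  is_subgroup M H /\ forall g x, H x -> H (gmul (gmul g x) (ginv g)).

(* Finite index: finitely many left cosets r H cover M. *)
Definition finite_index (M : group) (H : M -> Prop) : Prop :=
  exists reps : list M, forall g : M, exists r, In r reps /\ H (gmul (ginv r) g).

Definition iso_to_Z (M : group) (H : M -> Prop) : Prop :=
  exists f : Z -> M,
    (forall a b, f (a + b)%Z = gmul (f a) (f b)) /\
    (forall a b, f a = f b -> a = b) /\
    (forall g, H g <-> exists n, f n = g).

Definition is_automorphism (M : group) (phi : M -> M) : Prop :=
  (forall x y, phi (gmul x y) = gmul (phi x) (phi y)) /\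
  (forall x y, phi x = phi y -> x = y) /\
  (forall y, exists x, phi x = y).

Definition is_characteristic (M : group) (H : M -> Prop) : Prop :=
  is_subgroup M H /\
  forall phi, is_automorphism M phi ->
    (forall x, H x -> H (phi x)) /\ (forall y, H y -> exists x, H x /\ phi x = y).

(* Let Theta be the intersection of the preimages phi^-1(Gamma) over all
   automorphisms phi of M; it is a characteristic subgroup contained in Gamma.
   If Gamma has n left cosets, the pigeonhole principle puts some power g^j,
   0 < j <= n, of every g in Gamma, hence g^(n!) lies in Gamma for every g.
   Applied to phi g this shows that Theta contains all (n!)-th powers, in
   particular a nontrivial element of Gamma ~ Z; and a nontrivial subgroup of
   an infinite cyclic group is infinite cyclic. *)
From Stdlib Require Import ZArith List.
From Stdlib Require Import Lia Permutation Wf_nat Classical ClassicalEpsilon.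

Section Groups.

Context {G : group}.
Implicit Types (a x y : G) (H : G -> Prop).

Lemma gmul_cancel_l a x y : gmul a x = gmul a y -> x = y.
Proof.
  intro E.
  rewrite <- (gmul1l G x), <- (gmul1l G y), <- (gmulVl G a), <- !gmulA, E.
  reflexivity.
Qed.

Lemma ginv_unique x y : gmul x y = gone -> x = ginv y.
Proof.
  intro E. rewrite <- (gmul1r G x), <- (gmulVr G y), gmulA, E, gmul1l. reflexivity.
Qed.

Fixpoint gpow (g : G) (n : nat) : G :=
  match n with 0 => gone | S n => gmul g (gpow g n) end.

Lemma gpow_add g m n : gpow g (m + n) = gmul (gpow g m) (gpow g n).
Proof.
  induction m as [|m IH]; simpl.
  - now rewrite gmul1l.
  - now rewrite IH, gmulA.
Qed.

Lemma gpow_mul g m n : gpow g (m * n) = gpow (gpow g m) n.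
Proof.
  induction n as [|n IH]; simpl.
  - now rewrite Nat.mul_0_r.
  - now rewrite Nat.mul_succ_r, Nat.add_comm, gpow_add, IH.
Qed.

Lemma subgroup_gpow H g n : is_subgroup G H -> H g -> H (gpow g n).
Proof. intros [H1 [Hmul _]] Hg. induction n; simpl; auto. Qed.

Lemma subgroup_cancel_l H a x : is_subgroup G H -> H a -> H (gmul a x) -> H x.
Proof.
  intros [_ [Hmul Hinv]] Ha Hax.
  rewrite <- (gmul1l G x), <- (gmulVl G a), <- gmulA. auto.
Qed.

Lemma subgroup_bigcap {I : Type} (P : I -> Prop) (S : I -> G -> Prop) :
  (forall i, P i -> is_subgroup G (S i)) ->
  is_subgroup G (fun x => forall i, P i -> S i x).
Proof.
  intro HS. split; [|split].
  - intros i Pi. apply (HS i Pi).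
  - intros x y Hx Hy i Pi. apply (HS i Pi); auto.
  - intros x Hx i Pi. apply (HS i Pi); auto.
Qed.

Definition cosets_cover H (reps : list G) : Prop :=
  forall g, exists r, In r reps /\ H (gmul (ginv r) g).

Lemma cosets_cover_gpow_pos H reps : is_subgroup G H -> cosets_cover H reps ->
  forall g, exists j, (0 < j <= length reps)%nat /\ H (gpow g j).
Proof.
  intros HS Hcover g.
  destruct (@Permutation_pigeonhole_rel _ _ (fun i r => H (gmul (ginv r) (gpow g i)))
              (seq 0 (S (length reps))) reps)
    as [i [i' [l [Hperm [r [_ [Hi Hi']]]]]]].
  - apply Forall_forall. intros i _.
    destruct (Hcover (gpow g i)) as [r [Hr Hri]].
    apply Exists_exists. eauto.
  - rewrite length_seq. lia.
  - assert (Hshift : forall m n, (m < n <= length reps)%nat ->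
              H (gmul (ginv r) (gpow g m)) -> H (gmul (ginv r) (gpow g n)) ->
              exists j, (0 < j <= length reps)%nat /\ H (gpow g j)).
    { intros m n Hmn Hm Hn. exists (n - m)%nat. split; [lia|].
      apply (subgroup_cancel_l H _ _ HS Hm).
      rewrite <- gmulA, <- gpow_add.
      now replace (m + (n - m))%nat with n by lia. }
    pose proof (Permutation_NoDup Hperm (seq_NoDup _ _)) as Hnodup.
    assert (Hii' : i <> i').
    { intros ->. inversion Hnodup as [|? ? Hnotin]. apply Hnotin. simpl. auto. }
    assert (Hrange : forall k, In k (i :: i' :: l) -> (k <= length reps)%nat).
    { intros k Hk. apply Permutation_sym, (Permutation_in k) in Hperm; auto.
      apply in_seq in Hperm. lia. }
    pose proof (Hrange i ltac:(simpl; auto)) as Hi_le.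
    pose proof (Hrange i' ltac:(simpl; auto)) as Hi'_le.
    destruct (Nat.lt_gt_cases i i') as [[Hlt | Hgt] _]; auto.
    + apply (Hshift i i'); auto; lia.
    + apply (Hshift i' i); auto; lia.
Qed.

Lemma Nat_divide_fact j m : (0 < j <= m)%nat -> Nat.divide j (fact m).
Proof.
  induction m as [|m IH]; intro Hj; [lia|].
  destruct (Nat.eq_dec j (S m)) as [->|Hne].
  - exists (fact m). simpl. lia.
  - apply Nat.divide_mul_r, IH. lia.
Qed.

Lemma cosets_cover_gpow_fact H reps : is_subgroup G H -> cosets_cover H reps ->
  forall g, H (gpow g (fact (length reps))).
Proof.
  intros HS Hcover g.
  destruct (cosets_cover_gpow_pos H reps HS Hcover g) as [j [Hj Hgj]].
  destruct (Nat_divide_fact j (length reps) Hj) as [k ->].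
  rewrite Nat.mul_comm, gpow_mul. now apply subgroup_gpow.
Qed.

End Groups.

Definition is_hom (G H : group) (f : G -> H) : Prop :=
  forall x y, f (gmul x y) = gmul (f x) (f y).

Section Homomorphisms.

Context {G H : group} {f : G -> H}.
Hypothesis fhom : is_hom G H f.

Lemma hom_one : f gone = gone.
Proof. apply (gmul_cancel_l (f gone)). now rewrite <- fhom, !gmul1r. Qed.

Lemma hom_inv x : f (ginv x) = ginv (f x).
Proof. apply ginv_unique. now rewrite <- fhom, gmulVl, hom_one. Qed.

Lemma hom_gpow g n : f (gpow g n) = gpow (f g) n.
Proof.
  induction n as [|n IH]; simpl.
  - exact hom_one.
  - now rewrite fhom, IH.
Qed.

Lemma subgroup_preimage S : is_subgroup H S -> is_subgroup G (fun x => S (f x)).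
Proof.
  intros [S1 [Smul Sinv]]. split; [|split].
  - now rewrite hom_one.
  - intros x y Hx Hy. rewrite fhom. auto.
  - intros x Hx. rewrite hom_inv. auto.
Qed.

End Homomorphisms.

Section Automorphisms.

Context {M : group}.

Lemma automorphism_id : is_automorphism M (fun x => x).
Proof. split; [|split]; eauto. Qed.

Lemma automorphism_comp phi psi : is_automorphism M phi -> is_automorphism M psi ->
  is_automorphism M (fun x => psi (phi x)).
Proof.
  intros [phom [pinj psurj]] [qhom [qinj qsurj]]. split; [|split].
  - intros x y. now rewrite phom, qhom.
  - auto.
  - intro z. destruct (qsurj z) as [y <-]. destruct (psurj y) as [x <-]. eauto.
Qed.

Lemma automorphism_inverse phi : is_automorphism M phi ->
  exists psi, is_automorphism M psi /\ forall x, psi (phi x) = x.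
Proof.
  intros [phom [pinj psurj]].
  pose (psi y := proj1_sig (constructive_indefinite_description _ (psurj y))).
  assert (Hpsi : forall y, phi (psi y) = y).
  { intro y. exact (proj2_sig (constructive_indefinite_description _ (psurj y))). }
  exists psi. split; [split; [|split]|].
  - intros x y. apply pinj. now rewrite phom, !Hpsi.
  - intros x y E. now rewrite <- (Hpsi x), <- (Hpsi y), E.
  - intro x. exists (phi x). apply pinj, Hpsi.
  - intro x. apply pinj, Hpsi.
Qed.

Lemma characteristic_of_aut_stable Theta : is_subgroup M Theta ->
  (forall phi x, is_automorphism M phi -> Theta x -> Theta (phi x)) ->
  is_characteristic M Theta.
Proof.
  intros HS Hstable. split; [exact HS|]. intros phi Hphi. split; [auto|].
  intros y Hy. destruct (automorphism_inverse phi Hphi) as [psi [Hpsi Hinv]].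
  exists (psi y). split; [auto|].
  destruct Hphi as [_ [_ psurj]]. destruct (psurj y) as [x <-]. now rewrite Hinv.
Qed.

Definition aut_core (Gamma : M -> Prop) (x : M) : Prop :=
  forall phi, is_automorphism M phi -> Gamma (phi x).

Variable Gamma : M -> Prop.
Hypothesis HGamma : is_subgroup M Gamma.

Lemma aut_core_subgroup : is_subgroup M (aut_core Gamma).
Proof.
  apply (subgroup_bigcap (is_automorphism M) (fun phi x => Gamma (phi x))).
  intros phi [phom _]. exact (subgroup_preimage phom Gamma HGamma).
Qed.

Lemma aut_core_sub x : aut_core Gamma x -> Gamma x.
Proof. intro Hx. exact (Hx _ automorphism_id). Qed.

Lemma aut_core_characteristic : is_characteristic M (aut_core Gamma).
Proof.
  apply characteristic_of_aut_stable; [exact aut_core_subgroup|].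
  intros phi x Hphi Hx psi Hpsi. exact (Hx _ (automorphism_comp phi psi Hphi Hpsi)).
Qed.

Lemma aut_core_gpow_fact reps : cosets_cover Gamma reps ->
  forall g, aut_core Gamma (gpow g (fact (length reps))).
Proof.
  intros Hcover g phi [phom _].
  rewrite (hom_gpow phom). exact (cosets_cover_gpow_fact Gamma reps HGamma Hcover _).
Qed.

End Automorphisms.

Definition Z_group : group :=
  Group Z Z.add Z.opp 0%Z Z.add_assoc Z.add_0_l Z.add_0_r
    Z.add_opp_diag_l Z.add_opp_diag_r.

Lemma gpow_Z_group n : gpow (1%Z : Z_group) n = Z.of_nat n.
Proof.
  induction n as [|n IH]; [reflexivity|].
  change (1 + gpow (1%Z : Z_group) n = Z.of_nat (S n))%Z. rewrite IH. lia.
Qed.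

Section SubgroupsOfZ.

Variable S : Z -> Prop.
Hypothesis HS : is_subgroup Z_group S.

Let S0 : S 0%Z := proj1 HS.
Let Sadd a b : S a -> S b -> S (a + b)%Z := proj1 (proj2 HS) a b.
Let Sopp a : S a -> S (- a)%Z := proj2 (proj2 HS) a.

Lemma Z_subgroup_mul d q : S d -> S (q * d)%Z.
Proof.
  intro Hd. induction q as [|q IH|q IH] using Z.peano_ind.
  - exact S0.
  - rewrite Z.mul_succ_l. auto.
  - rewrite Z.mul_pred_l. unfold Z.sub. auto.
Qed.

Lemma Z_subgroup_divide n : S n -> n <> 0%Z ->
  exists d, (0 < d)%Z /\ forall k, S k <-> Z.divide d k.
Proof.
  intros Hn Hn0.
  pose (P m := (0 < m)%nat /\ S (Z.of_nat m)).
  destruct (dec_inh_nat_subset_has_unique_least_element P (fun m => classic (P m)))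
    as [d [[[Hd0 Hd] Hdmin] _]].
  { exists (Z.to_nat (Z.abs n)). split; [lia|].
    rewrite Z2Nat.id by lia.
    destruct (Z.le_gt_cases 0 n).
    - now rewrite Z.abs_eq.
    - rewrite Z.abs_neq by lia. auto. }
  exists (Z.of_nat d). split; [lia|]. intro k. split.
  - intro Hk. apply Z.mod_divide; [lia|].
    assert (Hmod : S (k mod Z.of_nat d)%Z).
    { rewrite Z.mod_eq by lia.
      replace (k - Z.of_nat d * (k / Z.of_nat d))%Z
        with (k + - (k / Z.of_nat d * Z.of_nat d))%Z by ring.
      auto using Z_subgroup_mul. }
    pose proof (Z.mod_pos_bound k (Z.of_nat d) ltac:(lia)).
    apply NNPP. intro Hne.
    assert (Hle : (d <= Z.to_nat (k mod Z.of_nat d))%nat).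
    { apply Hdmin. split; [lia|]. now rewrite Z2Nat.id by lia. }
    lia.
  - intros [q ->]. now apply Z_subgroup_mul.
Qed.

End SubgroupsOfZ.

Lemma iso_to_Z_infinite_order (M : group) (Gamma : M -> Prop) : iso_to_Z M Gamma ->
  exists g : M, forall n, n <> 0%nat -> gpow g n <> gone.
Proof.
  intros [f [fhom [finj _]]]. exists (f 1%Z). intros n Hn E.
  rewrite <- (@hom_gpow Z_group M f fhom), gpow_Z_group in E.
  rewrite <- (@hom_one Z_group M f fhom) in E.
  apply finj in E. cbn in E. lia.
Qed.

Lemma iso_to_Z_subgroup (M : group) (Gamma Theta : M -> Prop) :
  iso_to_Z M Gamma -> is_subgroup M Theta -> (forall x, Theta x -> Gamma x) ->
  forall g, Theta g -> g <> gone -> iso_to_Z M Theta.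
Proof.
  intros [f [fhom [finj fim]]] HTheta Hsub g Hg Hg1.
  pose proof (@subgroup_preimage Z_group M f fhom Theta HTheta) as HS.
  destruct (proj1 (fim g) (Hsub g Hg)) as [n <-].
  assert (Hn0 : n <> 0%Z).
  { intros ->. apply Hg1. exact (@hom_one Z_group M f fhom). }
  destruct (Z_subgroup_divide _ HS n Hg Hn0) as [d [Hd Hdiv]].
  exists (fun a => f (d * a)%Z). split; [|split].
  - intros a b. rewrite Z.mul_add_distr_l. apply fhom.
  - intros a b E. apply finj in E. nia.
  - intro x. split.
    + intro Hx. destruct (proj1 (fim x) (Hsub x Hx)) as [k <-].
      destruct (proj1 (Hdiv k) Hx) as [q ->]. exists q. f_equal. ring.
    + intros [q <-]. apply (proj2 (Hdiv _)). exists q. ring.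
Qed.

Theorem proposition3p6 (M : group) (Gamma : M -> Prop) :
  is_normal_subgroup M Gamma ->
  finite_index M Gamma ->
  iso_to_Z M Gamma ->
  exists Theta : M -> Prop,
    is_characteristic M Theta /\ iso_to_Z M Theta /\
    (forall x, Theta x -> Gamma x).
Proof.
  intros [HGamma _] [reps Hcover] Hiso.
  destruct (iso_to_Z_infinite_order M Gamma Hiso) as [g Hg].
  exists (aut_core Gamma). split; [|split].
  - exact (aut_core_characteristic Gamma HGamma).
  - apply (iso_to_Z_subgroup M Gamma _ Hiso (aut_core_subgroup Gamma HGamma)
             (aut_core_sub Gamma) (gpow g (fact (length reps)))).
    + exact (aut_core_gpow_fact Gamma HGamma reps Hcover g).
    + apply Hg, fact_neq_0.
  - exact (aut_core_sub Gamma).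
Qed.
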